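(* Let $\Bbbk$ be an algebraically closed field and $A$ a semisimple $\Bbbk$-algebra, so that $A\cong M_{n_1}(\Bbbk)\times\cdots\times M_{n_r}(\Bbbk)$ by the Artin–Wedderburn theorem. Then $\operatorname{Frobdim}(A)=\sum_{i=1}^r n_i^2$.
   Context: A nearly Frobenius coproduct on a $\Bbbk$-algebra $A$ is a $\Bbbk$-linear map $\Delta:A\to A\otimes_\Bbbk A$ that is an $A$-bimodule morphism, i.e. $\Delta(ab)=(a\otimes 1)\Delta(b)=\Delta(a)(1\otimes b)$ for all $a,b\in A$. The Frobenius space of $A$ is the vector space of all such coproducts, and $\operatorname{Frobdim}A$ is its dimension over $\Bbbk$. *)

From HB Require Import structures.
From mathcomp Require Import all_boot all_algebra all_field.
Set Implicit Arguments. Unset Strict Implicit. Unset Printing Implicit Defensive.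
Import GRing.Theory.
Local Open Scope ring_scope.

(* Semisimple: zero Jacobson radical.  For a finite-dimensional algebra,
   x lies in the Jacobson radical iff a * x is nilpotent for every a. *)
Definition semisimple (F : fieldType) (A : falgType F) : Prop :=
  forall x : A, (forall a : A, exists m : nat, (a * x) ^+ m = 0) -> x = 0.

Definition fdim (F : fieldType) (A : falgType F) : nat := \dim (fullv : {vspace A}).
Definition fbasis (F : fieldType) (A : falgType F) : (fdim A).-tuple A :=
  vbasis (fullv : {vspace A}).

(* Model of A (x) A: a matrix T : 'M_(d,d) represents
   \sum_(i,j) T i j (e_i (x) e_j), where e = fbasis A. *)
Definition tens (F : fieldType) (A : falgType F) := 'M[F]_(fdim A, fdim A).

(* Matrix of left multiplication by a, so that (a (x) 1) T = lmx a *m T. *)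
Definition lmx (F : fieldType) (A : falgType F) (a : A) : 'M[F]_(fdim A) :=
  \matrix_(k, i) coord (fbasis A) k (a * tnth (fbasis A) i).
(* Matrix of right multiplication by b, so that T (1 (x) b) = T *m rmx b. *)
Definition rmx (F : fieldType) (A : falgType F) (b : A) : 'M[F]_(fdim A) :=
  \matrix_(j, l) coord (fbasis A) l (tnth (fbasis A) j * b).

Definition nearly_frobenius (F : fieldType) (A : falgType F)
    (D : 'Hom(A, tens A)) : Prop :=
  forall a b : A, D (a * b) = lmx a *m D b /\ D (a * b) = D a *m rmx b.

Definition wedderburn_iso (F : fieldType) (A : falgType F) (r : nat)
    (n : 'I_r -> nat) (phi : forall i : 'I_r, A -> 'M[F]_(n i)) : Prop :=
  [/\ forall i, forall (c : F) (a b : A), phi i (c *: a + b) = c *: phi i a + phi i b,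
      forall i, forall a b : A, phi i (a * b) = phi i a *m phi i b,
      forall i, phi i 1 = 1%:M,
      forall a : A, (forall i, phi i a = 0) -> a = 0
    & forall M : (forall i : 'I_r, 'M[F]_(n i)), exists a : A, forall i, phi i a = M i].

(* A nearly Frobenius coproduct is determined by Delta(1), which can be any
   balanced tensor T, i.e. one with (a (x) 1) T = T (1 (x) a) for all a; so
   Frobdim A is the dimension of the space of balanced tensors.  In terms of the
   matrix units E^i_pq of A = prod_i M_(n_i), the map
   x |-> sum_(i,s,p) E^i_sp (x) x E^i_ps is a linear bijection from A onto the
   balanced tensors: a balanced T is recovered from its corner
   E^i_00 T E^i_00, whose coefficients on E^i_0p (x) E^i_q0 are the entries of
   the preimage of T.  Hence Frobdim A = dim A = sum_i n_i^2. *)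

From HB Require Import structures.
From mathcomp Require Import all_boot all_algebra all_field.
Import GRing.Theory.
Local Open Scope ring_scope.
Set Implicit Arguments.
Unset Strict Implicit.
Unset Printing Implicit Defensive.

Section TensorModel.
Variables (F : fieldType) (A : falgType F).
Local Notation d := (fdim A).
Local Notation e k := (tnth (fbasis A) k).

Lemma coord_fbasis (k j : 'I_d) : coord (fbasis A) k (e j) = (j == k)%:R.
Proof. by rewrite (tnth_nth 0) coord_free // (basis_free (vbasisP fullv)). Qed.

Lemma fbasis_expand (v : A) : v = \sum_k coord (fbasis A) k v *: e k.
Proof.
rewrite {1}(coord_vbasis (memvf v)); apply: eq_bigr => k _.
by rewrite (tnth_nth 0).
Qed.

Lemma lmx_is_linear : linear (@lmx F A).
Proof.
by move=> c a b; apply/matrixP => k i; rewrite !mxE mulrDl -scalerAl linearP.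
Qed.
HB.instance Definition _ :=
  GRing.isLinear.Build F A 'M[F]_d _ (@lmx F A) lmx_is_linear.

Lemma lmxM (a b : A) : lmx (a * b) = lmx a *m lmx b.
Proof.
apply/matrixP => k i; rewrite !mxE -mulrA.
rewrite {1}(fbasis_expand (b * e i)) mulr_sumr linear_sum.
by apply: eq_bigr => j _; rewrite !mxE -scalerAr linearZ mulrC.
Qed.

Lemma rmxM (a b : A) : rmx (a * b) = rmx a *m rmx b.
Proof.
apply/matrixP => i l; rewrite !mxE mulrA.
rewrite {1}(fbasis_expand (e i * a)) mulr_suml linear_sum.
by apply: eq_bigr => j _; rewrite !mxE -scalerAl linearZ.
Qed.

Lemma lmx1 : lmx (1 : A) = 1%:M.
Proof. by apply/matrixP => k i; rewrite !mxE mul1r coord_fbasis eq_sym. Qed.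

Definition tmul (x y : A) : tens A :=
  \matrix_(k, l) (coord (fbasis A) k x * coord (fbasis A) l y).

Lemma lmx_tmul (a x y : A) : lmx a *m tmul x y = tmul (a * x) y.
Proof.
apply/matrixP => k l; rewrite !mxE.
rewrite {2}(fbasis_expand x) mulr_sumr linear_sum mulr_suml.
apply: eq_bigr => i _; rewrite !mxE -scalerAr linearZ.
by rewrite mulrA [coord _ k _ * _]mulrC.
Qed.

Lemma tmul_rmx (b x y : A) : tmul x y *m rmx b = tmul x (y * b).
Proof.
apply/matrixP => k l; rewrite !mxE.
rewrite {2}(fbasis_expand y) mulr_suml linear_sum mulr_sumr.
by apply: eq_bigr => i _; rewrite !mxE -scalerAl linearZ mulrA.
Qed.

Lemma tmul_is_linear (x : A) : linear (tmul x).
Proof.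
by move=> c y z; apply/matrixP => k l; rewrite !mxE linearP mulrDr mulrCA.
Qed.
HB.instance Definition _ (x : A) :=
  GRing.isLinear.Build F A (tens A) _ (tmul x) (tmul_is_linear x).

Lemma tmul_suml (I : finType) (c : I -> F) (x : I -> A) (y : A) :
  tmul (\sum_i c i *: x i) y = \sum_i c i *: tmul (x i) y.
Proof.
apply/matrixP => k l; rewrite !mxE summxE linear_sum mulr_suml.
by apply: eq_bigr => i _; rewrite !mxE linearZ mulrA.
Qed.

Lemma tmul_sum (I J : finType) (c : I -> F) (x : I -> A) (c' : J -> F)
    (y : J -> A) :
  tmul (\sum_i c i *: x i) (\sum_j c' j *: y j) =
  \sum_i \sum_j (c i * c' j) *: tmul (x i) (y j).
Proof.
rewrite tmul_suml; apply: eq_bigr => i _.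
rewrite linear_sum scaler_sumr; apply: eq_bigr => j _.
by rewrite linearZ scalerA.
Qed.

Lemma tens_decomp (S : tens A) : S = \sum_k \sum_l S k l *: tmul (e k) (e l).
Proof.
rewrite {1}(matrix_sum_delta S); apply: eq_bigr => k _; apply: eq_bigr => l _.
congr (_ *: _); apply/matrixP => i j.
by rewrite !mxE !coord_fbasis ![_ == i]eq_sym ![_ == j]eq_sym -natrM mulnb.
Qed.

Lemma lmx_mul_rmx (a b : A) (S : tens A) :
  lmx a *m S *m rmx b = \sum_k \sum_l S k l *: tmul (a * e k) (e l * b).
Proof.
rewrite {1}(tens_decomp S) mulmx_sumr mulmx_suml; apply: eq_bigr => k _.
rewrite mulmx_sumr mulmx_suml; apply: eq_bigr => l _.
by rewrite -scalemxAr -scalemxAl lmx_tmul tmul_rmx.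
Qed.

Definition balanced (T : tens A) : Prop := forall a, lmx a *m T = T *m rmx a.

Definition lmul_tens (T : tens A) (a : A) : tens A := lmx a *m T.

Lemma lmul_tens_is_linear (T : tens A) : linear (lmul_tens T).
Proof. by move=> c a b; rewrite /lmul_tens linearP mulmxDl scalemxAl. Qed.
HB.instance Definition _ (T : tens A) :=
  GRing.isLinear.Build F A (tens A) _ (lmul_tens T) (lmul_tens_is_linear T).

Definition coprod (T : tens A) : 'Hom(A, tens A) := linfun (lmul_tens T).

Lemma coprodE (T : tens A) (a : A) : coprod T a = lmx a *m T.
Proof. exact: lfunE. Qed.

Lemma coprod_is_linear : linear coprod.
Proof.
move=> c S T; apply/lfunP => a.
by rewrite add_lfunE scale_lfunE !coprodE mulmxDr scalemxAr.
Qed.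
HB.instance Definition _ :=
  GRing.isLinear.Build F (tens A) 'Hom(A, tens A) _ coprod coprod_is_linear.

Lemma nearly_frobenius_coprod (T : tens A) :
  balanced T -> nearly_frobenius (coprod T).
Proof.
move=> balT a b; rewrite !coprodE lmxM -mulmxA.
by split=> //; rewrite balT mulmxA.
Qed.

Lemma nearly_frobeniusE (D : 'Hom(A, tens A)) :
  nearly_frobenius D -> balanced (D 1) /\ D = coprod (D 1).
Proof.
move=> frobD; split=> [a|].
  by rewrite -(frobD a 1).1 mulr1 -[a in LHS]mul1r (frobD 1 a).2.
by apply/lfunP => a; rewrite coprodE -(frobD a 1).1 mulr1.
Qed.

Lemma frobenius_space (U : {vspace tens A}) :
  (forall T, T \in U <-> balanced T) ->
  exists V : {vspace 'Hom(A, tens A)},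
    (forall D, D \in V <-> nearly_frobenius D) /\ \dim V = \dim U.
Proof.
move=> UP; pose coprodL := linfun coprod.
exists (coprodL @: U)%VS; split=> [D|].
  split=> [/memv_imgP[T /UP balT ->]|/nearly_frobeniusE[balD1 ->]].
    by rewrite lfunE; apply: nearly_frobenius_coprod.
  by rewrite -lfunE; apply: memv_img; apply/UP.
apply: limg_dim_eq; have /eqP -> : lker coprodL == 0%VS; last exact: capv0.
apply/lker0P => S T; rewrite !lfunE => /lfunP/(_ 1).
by rewrite !coprodE lmx1 !mul1mx.
Qed.

End TensorModel.

Section DeltaMatrices.
Variable F : fieldType.

(* Matrix units with nat indices, so that a unit of block i can be placed in
   every block j, where its indices need not be ordinals of n j. *)
Definition delta_mxn (m p q : nat) : 'M[F]_m :=
  \matrix_(u, v) ((u == p :> nat) && (v == q :> nat))%:R.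

Lemma delta_mxnE m (p q : 'I_m) : delta_mxn m p q = delta_mx p q.
Proof. by apply/matrixP => u v; rewrite !mxE. Qed.

Lemma mulmx_delta m (M : 'M[F]_m) (s p : 'I_m) :
  M *m delta_mx s p = \sum_u M u s *: delta_mx u p.
Proof.
rewrite {1}(matrix_sum_delta M) mulmx_suml; apply: eq_bigr => u _.
rewrite mulmx_suml (bigD1 s) //= big1 ?addr0 => [|v /negbTE vs].
  by rewrite -scalemxAl mul_delta_mx.
by rewrite -scalemxAl mul_delta_mx_cond vs mulr0n scaler0.
Qed.

Lemma delta_mulmx m (M : 'M[F]_m) (s p : 'I_m) :
  delta_mx p s *m M = \sum_u M s u *: delta_mx p u.
Proof.
apply: trmx_inj; rewrite trmx_mul trmx_delta mulmx_delta linear_sum.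
by apply: eq_bigr => u _; rewrite /= linearZ /= trmx_delta mxE.
Qed.

Lemma mulmx_deltaE m (M : 'M[F]_m) (j k a b : 'I_m) :
  (M *m delta_mx j k) a b = M a j * (b == k)%:R.
Proof.
rewrite mulmx_delta summxE (bigD1 a) //= big1 ?addr0 => [|u /negbTE ua].
  by rewrite !mxE eqxx.
by rewrite !mxE [a == u]eq_sym ua mulr0.
Qed.

Lemma sum_delta_mxE m n (g : 'I_m -> 'I_n -> F) (a : 'I_m) (b : 'I_n) :
  \sum_s \sum_t g s t * delta_mx s t a b = g a b.
Proof.
transitivity ((\matrix_(s, t) g s t) a b); last by rewrite mxE.
rewrite {1}(matrix_sum_delta (\matrix_(s, t) g s t)) summxE.
by apply: eq_bigr => s _; rewrite summxE; apply: eq_bigr => t _; rewrite !mxE.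
Qed.
End DeltaMatrices.

Lemma exchange_big3 (R : nmodType) (I J K : finType) (f : I -> J -> K -> R) :
  \sum_i \sum_j \sum_k f i j k = \sum_k \sum_j \sum_i f i j k.
Proof.
under eq_bigr do rewrite exchange_big; rewrite exchange_big.
by under eq_bigr do rewrite exchange_big.
Qed.

Lemma exchange_big22 (R : nmodType) (I J K L : finType)
    (f : I -> J -> K -> L -> R) :
  \sum_i \sum_j \sum_k \sum_l f i j k l = \sum_k \sum_l \sum_i \sum_j f i j k l.
Proof.
rewrite pair_big [RHS]pair_big; under eq_bigr do rewrite pair_big.
by under [RHS]eq_bigr do rewrite pair_big; rewrite exchange_big.
Qed.

Section Wedderburn.
Variables (F : fieldType) (A : falgType F) (r : nat) (n : 'I_r -> nat)
  (phi : forall i : 'I_r, A -> 'M[F]_(n i)).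
Hypothesis phiW : wedderburn_iso phi.

Lemma phi_is_linear i : linear (phi i).
Proof. by case: phiW => phi_lin *; apply: phi_lin. Qed.
HB.instance Definition _ i :=
  GRing.isLinear.Build F A 'M[F]_(n i) _ (phi i) (phi_is_linear i).

Lemma phiM i (a b : A) : phi i (a * b) = phi i a *m phi i b.
Proof. by case: phiW. Qed.

Lemma phi1 i : phi i 1 = 1%:M.
Proof. by case: phiW. Qed.

Lemma phi_inj (a b : A) : (forall i, phi i a = phi i b) -> a = b.
Proof.
case: phiW => _ _ _ phi_eq0 _ eq_ab; apply/eqP; rewrite -subr_eq0; apply/eqP.
by apply: phi_eq0 => i; rewrite linearB /= eq_ab subrr.
Qed.

Lemma phi_surj (M : forall i, 'M[F]_(n i)) :
  exists a, [forall i, phi i a == M i].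
Proof.
case: phiW => _ _ _ _ /(_ M)[a phi_a].
by exists a; apply/forallP => i; rewrite phi_a.
Qed.

Definition munit i (p q : 'I_(n i)) : A :=
  xchoose (phi_surj (fun j => (j == i)%:R *: delta_mxn F (n j) p q)).
Arguments munit : clear implicits.

Lemma phi_munit j i (p q : 'I_(n i)) :
  phi j (munit i p q) = (j == i)%:R *: delta_mxn F (n j) p q.
Proof. exact/eqP/(forallP (xchooseP (phi_surj _))). Qed.

Lemma phi_munit_id i (p q : 'I_(n i)) : phi i (munit i p q) = delta_mx p q.
Proof. by rewrite phi_munit eqxx scale1r delta_mxnE. Qed.

Lemma phi_munit_neq j i (p q : 'I_(n i)) : j != i -> phi j (munit i p q) = 0.
Proof. by move=> /negbTE ji; rewrite phi_munit ji scale0r. Qed.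

Lemma phi_sum_block j (f : 'I_r -> A) :
  (forall i, j != i -> phi j (f i) = 0) -> phi j (\sum_i f i) = phi j (f j).
Proof.
move=> f_block; rewrite linear_sum (bigD1 j) //= big1 ?addr0 // => i ij.
by rewrite f_block // eq_sym.
Qed.

Lemma munitM i (p q u : 'I_(n i)) : munit i p q * munit i q u = munit i p u.
Proof.
apply: phi_inj => j; rewrite phiM; case: (eqVneq j i) => [->|ji].
  by rewrite !phi_munit_id mul_delta_mx.
by rewrite !phi_munit_neq // mul0mx.
Qed.

Lemma mul_munit i (s p : 'I_(n i)) (a : A) :
  a * munit i s p = \sum_u phi i a u s *: munit i u p.
Proof.
apply: phi_inj => j; rewrite phiM linear_sum; case: (eqVneq j i) => [->|ji].
  rewrite phi_munit_id mulmx_delta; apply: eq_bigr => u _.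
  by rewrite linearZ /= phi_munit_id.
rewrite phi_munit_neq // mulmx0 big1 // => u _.
by rewrite linearZ /= phi_munit_neq // scaler0.
Qed.

Lemma munit_mul i (p s : 'I_(n i)) (a : A) :
  munit i p s * a = \sum_u phi i a s u *: munit i p u.
Proof.
apply: phi_inj => j; rewrite phiM linear_sum; case: (eqVneq j i) => [->|ji].
  rewrite phi_munit_id delta_mulmx; apply: eq_bigr => u _.
  by rewrite linearZ /= phi_munit_id.
rewrite phi_munit_neq // mul0mx big1 // => u _.
by rewrite linearZ /= phi_munit_neq // scaler0.
Qed.

Lemma sum_munit : 1 = \sum_i \sum_p munit i p p.
Proof.
apply: phi_inj => j; rewrite phi1 phi_sum_block => [|i ji].
  rewrite linear_sum /= mx1_sum_delta.
  by apply: eq_bigr => p _; rewrite phi_munit_id.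
by rewrite linear_sum /= big1 // => p _; rewrite phi_munit_neq.
Qed.

Lemma phi_sum_munit (c : forall i, 'I_(n i) -> 'I_(n i) -> F) j :
  phi j (\sum_i \sum_p \sum_q c i p q *: munit i p q) = \matrix_(p, q) c j p q.
Proof.
rewrite phi_sum_block => [|i ji]; last first.
  rewrite linear_sum big1 //= => p _; rewrite linear_sum big1 // => q _.
  by rewrite linearZ /= phi_munit_neq // scaler0.
rewrite [RHS]matrix_sum_delta linear_sum; apply: eq_bigr => p _.
rewrite linear_sum; apply: eq_bigr => q _.
by rewrite linearZ /= phi_munit_id mxE.
Qed.

Definition block_index := {i : 'I_r & ('I_(n i) * 'I_(n i))%type}.

Definition block_entries (a : A) : {ffun block_index -> F^o} :=
  [ffun t => phi (tag t) a (tagged t).1 (tagged t).2].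

Lemma block_entries_is_linear : linear block_entries.
Proof. by move=> c a b; apply/ffunP => t; rewrite !ffunE linearP !mxE. Qed.
HB.instance Definition _ := GRing.isLinear.Build F A
  {ffun block_index -> F^o} _ block_entries block_entries_is_linear.

Lemma dim_wedderburn : \dim (fullv : {vspace A}) = (\sum_i n i ^ 2)%N.
Proof.
pose entriesL := linfun block_entries.
have ker0 : (fullv :&: lker entriesL = 0)%VS.
  have /eqP -> : lker entriesL == 0%VS; last exact: capv0.
  apply/lker0P => a b; rewrite !lfunE => /ffunP eq_ab.
  apply: phi_inj => i; apply/matrixP => p q.
  by have := eq_ab (Tagged _ (p, q)); rewrite !ffunE.
have /eqP onto : (entriesL @: fullv == fullv)%VS.
  rewrite eqEsubv subvf; apply/subvP => g _; apply/memv_imgP.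
  exists (\sum_i \sum_p \sum_q g (Tagged _ (p, q)) *: munit i p q).
    exact: memvf.
  by apply/ffunP => -[i [p q]]; rewrite lfunE ffunE /= phi_sum_munit mxE.
rewrite -[LHS](limg_dim_eq ker0) onto dimvf /dim /= muln1 card_tagged sumnE.
rewrite big_map big_enum; apply: eq_bigr => i _.
by rewrite card_prod card_ord mulnn.
Qed.

Hypothesis n_gt0 : forall i, (0 < n i)%N.
Local Notation e k := (tnth (fbasis A) k).

Definition casimir (x : A) : tens A :=
  \sum_i \sum_s \sum_p tmul (munit i s p) (x * munit i p s).

Lemma casimir_balanced (x : A) : balanced (casimir x).
Proof.
move=> a; rewrite mulmx_sumr mulmx_suml; apply: eq_bigr => i _.
have expandL s p : lmx a *m tmul (munit i s p) (x * munit i p s) =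
    \sum_u phi i a u s *: tmul (munit i u p) (x * munit i p s).
  by rewrite lmx_tmul mul_munit tmul_suml.
have expandR s p : tmul (munit i s p) (x * munit i p s) *m rmx a =
    \sum_u phi i a s u *: tmul (munit i s p) (x * munit i p u).
  rewrite tmul_rmx -mulrA munit_mul mulr_sumr linear_sum.
  by apply: eq_bigr => u _; rewrite -scalerAr linearZ.
rewrite mulmx_sumr mulmx_suml; under eq_bigr do rewrite mulmx_sumr.
under [RHS]eq_bigr do rewrite mulmx_suml.
under eq_bigr do under eq_bigr do rewrite expandL.
under [RHS]eq_bigr do under eq_bigr do rewrite expandR.
exact: exchange_big3.
Qed.

Lemma casimir_is_linear : linear casimir.
Proof.
move=> c x y; rewrite /casimir scaler_sumr -big_split; apply: eq_bigr => i _.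
rewrite scaler_sumr -big_split; apply: eq_bigr => s _.
rewrite scaler_sumr -big_split; apply: eq_bigr => p _.
by rewrite mulrDl -scalerAl linearP.
Qed.
HB.instance Definition _ :=
  GRing.isLinear.Build F A (tens A) _ casimir casimir_is_linear.

Definition pivot i : 'I_(n i) := Ordinal (n_gt0 i).

Definition corner_coef i (p q : 'I_(n i)) (S : tens A) : F^o :=
  \sum_k \sum_l S k l * (phi i (e k) (pivot i) p * phi i (e l) q (pivot i)).
Arguments corner_coef : clear implicits.

Lemma corner_coef_is_linear i p q : linear (corner_coef i p q).
Proof.
move=> c S T; rewrite /corner_coef scaler_sumr -big_split.
apply: eq_bigr => k _.
rewrite scaler_sumr -big_split; apply: eq_bigr => l _.
by rewrite !mxE mulrDl -mulrA.
Qed.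
HB.instance Definition _ i p q :=
  GRing.isLinear.Build F (tens A) F^o _
  (corner_coef i p q) (@corner_coef_is_linear i p q).

Lemma corner_coef_tmul i p q (x y : A) :
  corner_coef i p q (tmul x y) = phi i x (pivot i) p * phi i y q (pivot i).
Proof.
rewrite {2}(fbasis_expand x) {2}(fbasis_expand y) !linear_sum /= !summxE.
rewrite mulr_suml; apply: eq_bigr => k _.
rewrite mulr_sumr; apply: eq_bigr => l _.
by rewrite !linearZ /= !mxE mulrACA.
Qed.

Lemma corner_mul i (S : tens A) :
  lmx (munit i (pivot i) (pivot i)) *m S *m rmx (munit i (pivot i) (pivot i)) =
  \sum_p \sum_q
    corner_coef i p q S *: tmul (munit i (pivot i) p) (munit i q (pivot i)).
Proof.
rewrite lmx_mul_rmx.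
under eq_bigr => k _ do under eq_bigr => l _ do
  rewrite munit_mul mul_munit tmul_sum scaler_sumr.
under eq_bigr => k _ do under eq_bigr => l _ do under eq_bigr => p _ do
  rewrite scaler_sumr.
rewrite exchange_big22; apply: eq_bigr => p _; apply: eq_bigr => q _.
rewrite /corner_coef scaler_suml; apply: eq_bigr => k _.
by rewrite scaler_suml; apply: eq_bigr => l _; rewrite scalerA.
Qed.

Definition uncasimir (T : tens A) : A :=
  \sum_i \sum_q \sum_p corner_coef i p q T *: munit i q p.

Lemma phi_uncasimir i (T : tens A) :
  phi i (uncasimir T) = \matrix_(q, p) corner_coef i p q T.
Proof. exact: phi_sum_munit. Qed.

Lemma balanced_casimir (T : tens A) : balanced T -> T = casimir (uncasimir T).
Proof.
move=> balT; rewrite -[T in LHS]mul1mx -lmx1 sum_munit [in LHS]linear_sum /=.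
rewrite mulmx_suml /casimir; apply: eq_bigr => i _.
rewrite [in LHS]linear_sum /= mulmx_suml; apply: eq_bigr => s _.
have sandwich : lmx (munit i s s) *m T =
    lmx (munit i s (pivot i)) *m
    (lmx (munit i (pivot i) (pivot i)) *m T *m
     rmx (munit i (pivot i) (pivot i))) *m
    rmx (munit i (pivot i) s).
  rewrite !mulmxA -lmxM munitM -mulmxA -rmxM munitM -mulmxA -balT.
  by rewrite mulmxA -lmxM munitM.
rewrite [LHS]sandwich corner_mul mulmx_sumr mulmx_suml; apply: eq_bigr => p _.
rewrite [in RHS]mul_munit linear_sum /= mulmx_suml linear_sum.
apply: eq_bigr => q _; rewrite -scalemxAr -scalemxAl lmx_tmul tmul_rmx !munitM.
by rewrite /= linearZ phi_uncasimir mxE.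
Qed.

Lemma corner_casimir i p q (x : A) :
  corner_coef i p q (casimir x) = phi i x q p.
Proof.
rewrite /casimir linear_sum /= (bigD1 i) //= [X in _ + X]big1 ?addr0 => [|j ji].
  rewrite linear_sum; under eq_bigr => s _ do rewrite linear_sum.
  under eq_bigr => s _ do under eq_bigr => t _ do rewrite /= corner_coef_tmul
    phi_munit_id phiM phi_munit_id mulmx_deltaE mulrC.
  by rewrite sum_delta_mxE eqxx mulr1.
rewrite linear_sum big1 // => s _; rewrite linear_sum big1 // => t _.
by rewrite /= corner_coef_tmul phi_munit_neq ?mxE ?mul0r // eq_sym.
Qed.

Lemma casimir_inj : injective casimir.
Proof.
move=> x y eq_xy; apply: phi_inj => i; apply/matrixP => q p.
by rewrite -!corner_casimir eq_xy.
Qed.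

Lemma balanced_space :
  exists U : {vspace tens A},
    (forall T, T \in U <-> balanced T) /\ \dim U = \dim (fullv : {vspace A}).
Proof.
pose casimirL := linfun casimir; exists (limg casimirL); split=> [T|].
  split=> [/memv_imgP[x _ ->]|/balanced_casimir ->].
    by rewrite lfunE; apply: casimir_balanced.
  by rewrite -lfunE; apply/memv_img/memvf.
apply: limg_dim_eq; have /eqP -> : lker casimirL == 0%VS; last exact: capv0.
by apply/lker0P => x y; rewrite !lfunE; apply: casimir_inj.
Qed.
End Wedderburn.

Theorem corollary9 (F : closedFieldType) (A : falgType F) (r : nat)
    (n : 'I_r -> nat) :
  semisimple A ->
  (forall i, (0 < n i)%N) ->
  (exists phi : (forall i : 'I_r, A -> 'M[F]_(n i)), wedderburn_iso phi) ->
  exists V : {vspace 'Hom(A, tens A)},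
    (forall D : 'Hom(A, tens A), D \in V <-> nearly_frobenius D) /\
    \dim V = (\sum_(i < r) n i ^ 2)%N.
Proof.
(* Semisimplicity and algebraic closedness only serve to provide the
   Wedderburn decomposition, which is assumed here. *)
move=> _ n_gt0 [phi phiW].
have [U [balancedU dimU]] := balanced_space phiW n_gt0.
have [V [frobeniusV dimV]] := frobenius_space balancedU.
by exists V; split; last rewrite dimV dimU (dim_wedderburn phiW).
Qed.
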